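(* Let $\mathcal D$ be universal, $\mathrm M=(M,d)\in\mathfrak U_{\mathcal D}$, and let $r\in\mathcal D$, $r>0$, be such that no element of $\mathcal D$ lies in the interval $(r,2r]$. Then the relation $x\sim_r y\iff d(x,y)\le r$ is an equivalence relation on $M$, and for any two distinct $\sim_r$-classes $A\ne B$, any $a\in A$ and any $n\in d(A,B)$: (1) $n>2r$; (2) there exists $b\in B$ with $d(a,b)=n$; (3) $d_{\max}(A,B)-d_{\min}(A,B)\le r$.
   Context: $\mathcal D$ is a finite subset of $\mathbb R_{\ge0}$ containing $0$. $\mathfrak U_{\mathcal D}$ is the class of countable homogeneous metric spaces (every isometry between finite subspaces extends to an isometry of the space onto itself) with distance set exactly $\mathcal D$ into which every finite metric space with distances in $\mathcal D$ embeds isometrically; $\mathcal D$ is universal if this class is nonempty. For subsets $A,B\subseteq M$: $d(A,B)=\{d(a,b):a\in A,b\in B\}$, $d_{\min}(A,B)=\min d(A,B)$, $d_{\max}(A,B)=\max d(A,B)$. *)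

From Stdlib Require Import Reals List Relation_Definitions.
Open Scope R_scope.

Definition is_metric {M : Type} (d : M -> M -> R) : Prop :=
  (forall x y, 0 <= d x y) /\
  (forall x y, d x y = 0 <-> x = y) /\
  (forall x y, d x y = d y x) /\
  (forall x y z, d x z <= d x y + d y z).

Definition countable (M : Type) : Prop :=
  exists f : M -> nat, forall x y, f x = f y -> x = y.

(* Homogeneity: every isometry between finite subspaces (p restricted to the
   finite set A, onto its image) extends to an isometry of M onto itself. *)
Definition homogeneous {M : Type} (d : M -> M -> R) : Prop :=
  forall (A : list M) (p : M -> M),
    (forall x y, In x A -> In y A -> d (p x) (p y) = d x y) ->
    exists g : M -> M,
      (forall x y, g x = g y -> x = y) /\
      (forall y, exists x, g x = y) /\
      (forall x y, d (g x) (g y) = d x y) /\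
      (forall x, In x A -> g x = p x).

Definition dist_set_is {M : Type} (d : M -> M -> R) (D : list R) : Prop :=
  forall t, In t D <-> exists x y, d x y = t.

Definition finite_metric_in (D : list R) (n : nat) (f : nat -> nat -> R) : Prop :=
  (forall i, (i < n)%nat -> f i i = 0) /\
  (forall i j, (i < n)%nat -> (j < n)%nat -> i <> j -> 0 < f i j) /\
  (forall i j, (i < n)%nat -> (j < n)%nat -> f i j = f j i) /\
  (forall i j k, (i < n)%nat -> (j < n)%nat -> (k < n)%nat -> f i k <= f i j + f j k) /\
  (forall i j, (i < n)%nat -> (j < n)%nat -> In (f i j) D).

Definition D_universal_space {M : Type} (d : M -> M -> R) (D : list R) : Prop :=
  forall (n : nat) (f : nat -> nat -> R), finite_metric_in D n f ->
    exists e : nat -> M,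
      (forall i j, (i < n)%nat -> (j < n)%nat -> d (e i) (e j) = f i j).

Definition in_UD (D : list R) (M : Type) (d : M -> M -> R) : Prop :=
  is_metric d /\ countable M /\ homogeneous d /\ dist_set_is d D /\
  D_universal_space d D.

(* D (a finite subset of R_{>=0} containing 0, given as a list) is universal. *)
Definition universal (D : list R) : Prop :=
  exists (M : Type) (d : M -> M -> R), in_UD D M d.

Definition is_max_of (S : R -> Prop) (m : R) : Prop := S m /\ forall x, S x -> x <= m.
Definition is_min_of (S : R -> Prop) (m : R) : Prop := S m /\ forall x, S x -> m <= x.

From Stdlib Require Import Reals List Relation_Definitions Lra Lia Classical.
Open Scope R_scope.

(* Since no distance lies in (r, 2r], the triangle inequality makes [d <= r]
   transitive, and points of different classes are more than 2r apart.  For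
   d(a, b') with a, a' in A and b' in B, universality and homogeneity produce a
   point b with d(a, b) = d(a', b') and d(b, b') = d(a, a') <= r, so b lies in B;
   applied to a pair realising d_max and to the value d_min, this gives
   d_max <= d_min + r. *)

Lemma finite_has_max (L : list R) (S : R -> Prop) :
  (forall t, S t -> In t L) -> (exists t, S t) -> exists m, is_max_of S m.
Proof.
  revert S; induction L as [|h L IH]; intros S HSL [t0 St0].
  - destruct (HSL _ St0).
  - destruct (classic (exists t, S t /\ In t L)) as [HL|HnL].
    + destruct (IH (fun t => S t /\ In t L)) as [m [[Sm _] Hm]]; [tauto|exact HL|].
      destruct (classic (S h)) as [Sh|nSh].
      * exists (Rmax h m); split.
        { unfold Rmax; destruct (Rle_dec h m); assumption. }
        intros t St; destruct (HSL _ St) as [<-|Ht].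
        -- apply Rmax_l.
        -- apply Rle_trans with m; [apply Hm; tauto|apply Rmax_r].
      * exists m; split; [exact Sm|].
        intros t St; destruct (HSL _ St) as [<-|Ht]; [contradiction|apply Hm; tauto].
    + assert (Honly : forall t, S t -> t = h).
      { intros t St; destruct (HSL _ St) as [<-|Ht]; [reflexivity|].
        exfalso; apply HnL; eauto. }
      exists h; split.
      * rewrite <- (Honly _ St0); exact St0.
      * intros t St; rewrite (Honly _ St); apply Rle_refl.
Qed.

Lemma finite_has_min (L : list R) (S : R -> Prop) :
  (forall t, S t -> In t L) -> (exists t, S t) -> exists m, is_min_of S m.
Proof.
  intros HSL [t0 St0].
  destruct (finite_has_max (map Ropp L) (fun t => S (- t))) as [m [Sm Hm]].
  - intros t St; rewrite <- (Ropp_involutive t); apply in_map, HSL, St.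
  - exists (- t0); rewrite Ropp_involutive; exact St0.
  - exists (- m); split; [exact Sm|].
    intros t St; apply Ropp_le_cancel; rewrite Ropp_involutive.
    apply Hm; rewrite Ropp_involutive; exact St.
Qed.

(* Points 0, 1, 2, 3 with d01 = d23 = s, d12 = d03 = n and d02 = d13 = m: every
   triangle has side lengths s, n, m, so one triangle inequality check suffices. *)
Definition rectangle_dist (s n m : R) (i j : nat) : R :=
  match i, j with
  | 0, 1 | 1, 0 | 2, 3 | 3, 2 => s
  | 1, 2 | 2, 1 | 0, 3 | 3, 0 => n
  | 0, 2 | 2, 0 | 1, 3 | 3, 1 => m
  | _, _ => 0%R
  end%nat.

Lemma rectangle_dist_metric (D : list R) (s n m : R) :
  In 0 D -> In s D -> In n D -> In m D -> 0 < s -> 0 < n -> 0 < m ->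
  s <= n + m -> n <= s + m -> m <= s + n ->
  finite_metric_in D 4 (rectangle_dist s n m).
Proof.
  intros HD0 HDs HDn HDm Hs Hn Hm Hs_nm Hn_sm Hm_sn.
  repeat split; intros.
  - destruct i as [|[|[|[|i]]]]; simpl; reflexivity || lia.
  - destruct i as [|[|[|[|i]]]]; destruct j as [|[|[|[|j]]]]; simpl; lia || lra.
  - destruct i as [|[|[|[|i]]]]; destruct j as [|[|[|[|j]]]]; simpl; lia || lra.
  - destruct i as [|[|[|[|i]]]]; destruct j as [|[|[|[|j]]]];
      destruct k as [|[|[|[|k]]]]; simpl; lia || lra.
  - destruct i as [|[|[|[|i]]]]; destruct j as [|[|[|[|j]]]]; simpl; assumption || lia.
Qed.

Section ClassesOfUniversalSpace.

Context {M : Type} {d : M -> M -> R} {D : list R} {r : R}.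
Hypothesis Hmetric : is_metric d.
Hypothesis HD : forall x y, In (d x y) D.
Hypothesis Hhom : homogeneous d.
Hypothesis Huniv : D_universal_space d D.
Hypothesis Hgap : forall t, In t D -> ~ (r < t /\ t <= 2 * r).

Let dist_eq0 x y : d x y = 0 <-> x = y.
Proof. apply Hmetric. Qed.

Let dist_sym x y : d x y = d y x.
Proof. apply Hmetric. Qed.

Let dist_refl x : d x x = 0.
Proof. apply dist_eq0; reflexivity. Qed.

Let dist_triangle x y z : d x z <= d x y + d y z.
Proof. apply Hmetric. Qed.

Lemma homogeneous_extend3 (u0 u1 u2 v0 v1 v2 : M) :
  d v0 v1 = d u0 u1 -> d v0 v2 = d u0 u2 -> d v1 v2 = d u1 u2 ->
  exists g : M -> M, (forall x y, d (g x) (g y) = d x y) /\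
    g u0 = v0 /\ g u1 = v1 /\ g u2 = v2.
Proof.
  intros E01 E02 E12.
  (* Deciding [z = u_i] through [d z u_i = 0] needs no informative excluded middle. *)
  set (p z := if Req_EM_T (d z u0) 0 then v0
              else if Req_EM_T (d z u1) 0 then v1 else v2).
  assert (p0 : p u0 = v0).
  { unfold p; rewrite dist_refl; destruct (Req_EM_T 0 0); congruence. }
  assert (p1 : p u1 = v1).
  { unfold p; destruct (Req_EM_T (d u1 u0) 0) as [E|NE].
    - apply dist_eq0; rewrite E01, dist_sym; exact E.
    - rewrite dist_refl; destruct (Req_EM_T 0 0); congruence. }
  assert (p2 : p u2 = v2).
  { unfold p; destruct (Req_EM_T (d u2 u0) 0) as [E|NE].
    - apply dist_eq0; rewrite E02, dist_sym; exact E.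
    - destruct (Req_EM_T (d u2 u1) 0) as [E'|NE']; [|reflexivity].
      apply dist_eq0; rewrite E12, dist_sym; exact E'. }
  destruct (Hhom (u0 :: u1 :: u2 :: nil) p) as [g [_ [_ [Hg Hgp]]]].
  - intros x y Hx Hy.
    destruct Hx as [<-|[<-|[<-|[]]]]; destruct Hy as [<-|[<-|[<-|[]]]];
      rewrite ?p0, ?p1, ?p2, ?dist_refl; try reflexivity;
      rewrite ?(dist_sym v1 v0), ?(dist_sym u1 u0), ?(dist_sym v2 v0),
        ?(dist_sym u2 u0), ?(dist_sym v2 v1), ?(dist_sym u2 u1); assumption.
  - exists g; repeat split; [exact Hg|..]; rewrite Hgp; simpl; tauto.
Qed.

Lemma exists_rectangle_vertex (a a' c : M) :
  exists b, d a b = d a' c /\ d b c = d a a'.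
Proof.
  destruct (classic (a = a')) as [<-|Haa'].
  { exists c; rewrite !dist_refl; split; reflexivity. }
  destruct (classic (a' = c)) as [<-|Ha'c].
  { exists a; rewrite !dist_refl; split; reflexivity. }
  destruct (classic (a = c)) as [<-|Hac].
  { exists a'; split; apply dist_sym. }
  set (s := d a a'); set (n := d a' c); set (m := d a c).
  assert (Hpos : forall x y, x <> y -> 0 < d x y).
  { intros x y Hxy; destruct (proj1 Hmetric x y) as [|E]; [assumption|].
    exfalso; apply Hxy, dist_eq0; symmetry; exact E. }
  destruct (Huniv 4%nat (rectangle_dist s n m)) as [e He].
  { apply rectangle_dist_metric; try apply HD; try apply Hpos; try assumption.
    - rewrite <- (dist_refl a); apply HD.
    - unfold s, n, m; pose proof (dist_triangle a c a'); rewrite (dist_sym c a') in *; lra.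
    - unfold s, n, m; pose proof (dist_triangle a' a c); rewrite (dist_sym a' a) in *; lra.
    - apply dist_triangle. }
  destruct (homogeneous_extend3 (e 0%nat) (e 1%nat) (e 2%nat) a a' c)
    as [g [Hg [G0 [_ G2]]]];
    try (rewrite He; [reflexivity|lia..]).
  exists (g (e 3%nat)); split.
  - rewrite <- G0, Hg, He by lia; reflexivity.
  - rewrite <- G2, Hg, He by lia; reflexivity.
Qed.

Lemma dist_gt_2r_of_not_le (x y : M) : ~ d x y <= r -> 2 * r < d x y.
Proof.
  intros Hxy; destruct (Rle_lt_dec (d x y) (2 * r)) as [Hle|Hlt]; [|exact Hlt].
  exfalso; apply (Hgap _ (HD x y)); split; lra.
Qed.

Lemma close_trans (x y z : M) : d x y <= r -> d y z <= r -> d x z <= r.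
Proof.
  intros Hxy Hyz; apply NNPP; intros Hxz.
  pose proof (dist_gt_2r_of_not_le x z Hxz); pose proof (dist_triangle x y z); lra.
Qed.

Lemma close_equivalence : 0 <= r -> equivalence M (fun x y => d x y <= r).
Proof.
  intros Hr; split.
  - intros x; rewrite dist_refl; exact Hr.
  - intros x y z; apply close_trans.
  - intros x y Hxy; rewrite dist_sym; exact Hxy.
Qed.

Lemma dist_gt_2r_between_classes (x y a b : M) :
  ~ d x y <= r -> d a x <= r -> d b y <= r -> 2 * r < d a b.
Proof.
  intros Hxy Ha Hb; apply dist_gt_2r_of_not_le; intros Hab; apply Hxy.
  rewrite dist_sym in Ha.
  exact (close_trans x a y Ha (close_trans a b y Hab Hb)).
Qed.

Lemma class_dist_realised (x y a a' b' : M) :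
  d a x <= r -> d a' x <= r -> d b' y <= r ->
  exists b, d b y <= r /\ d a b = d a' b'.
Proof.
  intros Ha Ha' Hb'.
  destruct (exists_rectangle_vertex a a' b') as [b [Hab Hbb']].
  exists b; split; [|exact Hab].
  apply (close_trans b b' y); [|exact Hb'].
  rewrite Hbb'; apply (close_trans a x a'); [exact Ha|].
  rewrite dist_sym; exact Ha'.
Qed.

Lemma class_dist_le_add_r (x y a1 b1 a2 b2 : M) :
  d a1 x <= r -> d b1 y <= r -> d a2 x <= r -> d b2 y <= r ->
  d a1 b1 <= d a2 b2 + r.
Proof.
  intros Ha1 Hb1 Ha2 Hb2.
  destruct (class_dist_realised x y a1 a2 b2 Ha1 Ha2 Hb2) as [b [Hb <-]].
  assert (Hbb1 : d b b1 <= r).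
  { apply (close_trans b y b1); [exact Hb|]. rewrite dist_sym; exact Hb1. }
  pose proof (dist_triangle a1 b b1); lra.
Qed.

End ClassesOfUniversalSpace.

Theorem lemma3p2 (D : list R) (HD0 : In 0 D) (HDnn : forall t, In t D -> 0 <= t)
  (HDu : universal D) (M : Type) (d : M -> M -> R) (HM : in_UD D M d)
  (r : R) (HrD : In r D) (Hr : 0 < r)
  (Hgap : forall t, In t D -> ~ (r < t /\ t <= 2 * r)) :
  equivalence M (fun x y => d x y <= r) /\
  forall x y : M, ~ (d x y <= r) ->
    let dAB := fun n => exists a' b', d a' x <= r /\ d b' y <= r /\ d a' b' = n in
    (forall a n, d a x <= r -> dAB n ->
       n > 2 * r /\ exists b, d b y <= r /\ d a b = n) /\
    (exists mx mn, is_max_of dAB mx /\ is_min_of dAB mn /\ mx - mn <= r).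
Proof.
  destruct HM as [Hmetric [_ [Hhom [Hds Huniv]]]].
  assert (HD : forall x y, In (d x y) D) by (intros x y; apply Hds; eauto).
  split; [apply (close_equivalence Hmetric HD Hgap); lra|].
  intros x y Hxy dAB; split.
  { intros a n Ha [a' [b' [Ha' [Hb' <-]]]]; split.
    - exact (dist_gt_2r_between_classes Hmetric HD Hgap x y a' b' Hxy Ha' Hb').
    - exact (class_dist_realised Hmetric HD Hhom Huniv Hgap x y a a' b' Ha Ha' Hb'). }
  assert (HdAB_D : forall t, dAB t -> In t D) by (intros t [a [b [_ [_ <-]]]]; apply HD).
  assert (HdAB_ne : dAB (d x y)).
  { exists x, y; rewrite !(proj2 (proj1 (proj2 Hmetric) _ _) eq_refl).
    repeat split; lra. }
  destruct (finite_has_max D dAB HdAB_D (ex_intro _ _ HdAB_ne)) as [mx Hmx].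
  destruct (finite_has_min D dAB HdAB_D (ex_intro _ _ HdAB_ne)) as [mn Hmn].
  exists mx, mn; split; [exact Hmx|split; [exact Hmn|]].
  destruct Hmx as [[a1 [b1 [Ha1 [Hb1 <-]]]] _], Hmn as [[a2 [b2 [Ha2 [Hb2 <-]]]] _].
  pose proof (class_dist_le_add_r Hmetric HD Hhom Huniv Hgap x y a1 b1 a2 b2
                Ha1 Hb1 Ha2 Hb2); lra.
Qed.
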